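(* Let $(M, d)$ be a complete pointed metric space. Then the set $\check{M} := \{\check{x} : x \in M\}$ is a closed subset of the dual Banach space $(M^e)^*$, where $\check{x}(f)=f(x)$ for $f\in M^e$.
   Context: A pointed metric space is a metric space with a distinguished point $0$. $M^e$ denotes the normed space $E_c(M,\mathbb{R})$ of all continuous functions $f:M\to\mathbb{R}$ for which there is $k>0$ with $|f(x)|\le k\,d(x,0)$ for all $x\in M$, with norm $\|f\|_e=\sup_{x\in M,x\ne0}|f(x)|/d(x,0)$; $(M^e)^*$ is its dual with the operator norm. *)

From mathcomp Require Import all_boot all_order all_algebra.
From mathcomp Require Import boolp classical_sets reals.
Set Implicit Arguments. Unset Strict Implicit. Unset Printing Implicit Defensive.
Import Order.TTheory GRing.Theory Num.Theory.
Local Open Scope classical_set_scope.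
Local Open Scope ring_scope.

Section Defs.
Variables (R : realType) (T : Type).

Definition is_metric (d : T -> T -> R) : Prop :=
  (forall x y, 0 <= d x y) /\
  (forall x y, d x y = 0 <-> x = y) /\
  (forall x y, d x y = d y x) /\
  (forall x y z, d x z <= d x y + d y z).

Definition cauchy_seq (d : T -> T -> R) (u : nat -> T) : Prop :=
  forall eps : R, 0 < eps -> exists N : nat, forall m n : nat,
    (N <= m)%N -> (N <= n)%N -> d (u m) (u n) < eps.

Definition converges_to (d : T -> T -> R) (u : nat -> T) (l : T) : Prop :=
  forall eps : R, 0 < eps -> exists N : nat, forall n : nat,
    (N <= n)%N -> d (u n) l < eps.

Definition complete_metric (d : T -> T -> R) : Prop :=
  forall u : nat -> T, cauchy_seq d u -> exists l, converges_to d u l.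

Definition dcontinuous (d : T -> T -> R) (f : T -> R) : Prop :=
  forall x (eps : R), 0 < eps -> exists delta : R, 0 < delta /\
    forall y, d x y < delta -> `|f y - f x| < eps.

Definition in_Me (d : T -> T -> R) (x0 : T) (f : T -> R) : Prop :=
  dcontinuous d f /\ exists k : R, 0 < k /\ forall x, `|f x| <= k * d x x0.

Definition norm_e (d : T -> T -> R) (x0 : T) (f : T -> R) : R :=
  sup [set `|f x| / d x x0 | x in [set x | x <> x0]].

(* (M^e)^* : bounded linear functionals on M^e (functionals are represented
   as maps (T -> R) -> R; only their values on M^e matter) *)
Definition in_dual (d : T -> T -> R) (x0 : T) (phi : (T -> R) -> R) : Prop :=
  (forall (a : R) (f g : T -> R), in_Me d x0 f -> in_Me d x0 g ->
      phi (fun x => a * f x + g x) = a * phi f + phi g) /\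
  (exists C : R, forall f, in_Me d x0 f -> `|phi f| <= C * norm_e d x0 f).

Definition op_norm (d : T -> T -> R) (x0 : T) (phi : (T -> R) -> R) : R :=
  sup [set `|phi f| | f in [set f | in_Me d x0 f /\ norm_e d x0 f <= 1]].

Definition check_pt (x : T) : (T -> R) -> R := fun f => f x.

(* the set {x^check : x in M}, as a predicate on (M^e)^* (equality on M^e) *)
Definition in_checkM (d : T -> T -> R) (x0 : T) (phi : (T -> R) -> R) : Prop :=
  exists x : T, forall f, in_Me d x0 f -> phi f = check_pt x f.

Definition closed_in_dual (d : T -> T -> R) (x0 : T)
    (S : ((T -> R) -> R) -> Prop) : Prop :=
  forall phi, in_dual d x0 phi ->
    (forall eps : R, 0 < eps -> exists psi, in_dual d x0 psi /\ S psi /\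
        op_norm d x0 (fun f => phi f - psi f) < eps) ->
    S phi.

End Defs.

(* Let phi be a limit of evaluation functionals x_n^check in (M^e)^*.
   Every f with |f z| <= d(z, 0) has norm at most 1, so |phi f - f x_n| is
   bounded by ||phi - x_n^check||.  Testing against the 1-Lipschitz functions
   z |-> d(z, x_m) - d(0, x_m) gives d(x_n, x_m) <= ||phi - x_n^check|| +
   ||phi - x_m^check||, so (x_n) is Cauchy; by completeness it converges to
   some x.  A general f in M^e, rescaled to norm at most 1, then satisfies
   f(x_n) -> phi f, while f(x_n) -> f x by continuity; hence phi = x^check. *)
From mathcomp Require Import all_boot all_order all_algebra.
From mathcomp Require Import boolp classical_sets reals.
From mathcomp Require Import lra.
Set Implicit Arguments. Unset Strict Implicit. Unset Printing Implicit Defensive.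
Import Order.TTheory GRing.Theory Num.Theory.
Local Open Scope classical_set_scope.
Local Open Scope ring_scope.

Lemma eventually_inv_succ_lt (R : realType) (eps : R) : 0 < eps ->
  exists N : nat, forall n : nat, (N <= n)%N -> n.+1%:R^-1 < eps.
Proof.
move=> eps_gt0; exists (Num.Def.archi_bound eps^-1) => n le_Nn.
have inv_gt0 : 0 < eps^-1 by rewrite invr_gt0.
have inv_lt : eps^-1 < n.+1%:R.
  apply: (lt_le_trans (archi_boundP (ltW inv_gt0))).
  by rewrite ler_nat (leq_trans le_Nn).
by rewrite -(invrK eps) ltf_pV2 ?posrE // (lt_trans inv_gt0).
Qed.

Section PointedMetric.
Variables (R : realType) (T : Type) (d : T -> T -> R) (x0 : T).
Hypothesis d_metric : is_metric d.

Definition dist_dominated (f : T -> R) : Prop := forall z, `|f z| <= d z x0.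

Lemma dist_gt0 z : z <> x0 -> 0 < d z x0.
Proof.
case: d_metric => d_ge0 [d_eq0 _] zx0; rewrite lt_neqAle d_ge0 andbT eq_sym.
by apply/eqP => /d_eq0.
Qed.

Lemma norm_e_le1 f : dist_dominated f -> norm_e d x0 f <= 1.
Proof.
move=> f_dom; rewrite /norm_e; set E := [set _ | _ in _].
have [E_neq0|E_eq0] := pselect (E !=set0).
  apply: ge_sup => // _ [z zx0 <-].
  by rewrite ler_pdivrMr ?dist_gt0 // mul1r.
suff -> : E = set0 by rewrite sup0 ler01.
by apply/seteqP; split => // y Ey; apply: E_eq0; exists y.
Qed.

Lemma norm_e_ge0 f : in_Me d x0 f -> 0 <= norm_e d x0 f.
Proof.
move=> [_ [k [_ f_le]]]; rewrite /norm_e; set E := [set _ | _ in _].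
have [[y Ey]|E_eq0] := pselect (E !=set0).
  have E_ub : has_ubound E.
    by exists k => _ [z zx0 <-]; rewrite ler_pdivrMr ?dist_gt0.
  apply: le_trans (ub_le_sup E_ub Ey).
  by case: Ey => z zx0 <-; rewrite divr_ge0 // ltW // dist_gt0.
suff -> : E = set0 by rewrite sup0.
by apply/seteqP; split => // y Ey; apply: E_eq0; exists y.
Qed.

Lemma in_dual_bounded_on_unit_ball phi : in_dual d x0 phi ->
  exists C, forall f, in_Me d x0 f -> norm_e d x0 f <= 1 -> `|phi f| <= C.
Proof.
move=> [_ [C phi_le]]; exists `|C| => f f_Me f_le1.
apply: le_trans (phi_le f f_Me) _.
apply: le_trans (_ : `|C| * norm_e d x0 f <= _).
  by rewrite ler_wpM2r ?norm_e_ge0 ?ler_norm.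
by rewrite ler_piMr.
Qed.

Lemma dist_dominated_le_op_norm phi psi f :
  in_dual d x0 phi -> in_dual d x0 psi -> in_Me d x0 f -> dist_dominated f ->
  `|phi f - psi f| <= op_norm d x0 (fun g => phi g - psi g).
Proof.
move=> /in_dual_bounded_on_unit_ball [C1 phi_le].
move=> /in_dual_bounded_on_unit_ball [C2 psi_le] f_Me /norm_e_le1 f_le1.
apply: ub_le_sup; last by exists f.
exists (C1 + C2) => _ [g [g_Me g_le1] <-].
by apply: le_trans (ler_normB _ _) _; rewrite lerD ?phi_le ?psi_le.
Qed.

Lemma in_Me0 : in_Me d x0 (fun _ => 0).
Proof.
split; first by move=> x e e_gt0; exists 1; split => // y _; rewrite subrr normr0.
by exists 1; split => // z; rewrite normr0 mul1r; case: d_metric.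
Qed.

(* [in_dual] only states linearity as [phi (a f + g) = a phi f + phi g], hence
   the [+ 0] in the rescaled functions below. *)
Lemma in_dual_scale phi f a : in_dual d x0 phi -> in_Me d x0 f ->
  phi (fun z => a * f z + 0) = a * phi f.
Proof.
move=> [phi_lin _] f_Me.
have phi0 : phi (fun _ => 0) = 0.
  by move: (phi_lin 1 _ _ in_Me0 in_Me0); rewrite /= mul1r addr0 => ?; lra.
by rewrite phi_lin // ?phi0 ?addr0 //; exact: in_Me0.
Qed.

Lemma in_Me_shifted_dist y :
  in_Me d x0 (fun z => d z y - d x0 y) /\ dist_dominated (fun z => d z y - d x0 y).
Proof.
have [_ [_ [d_sym d_tri]]] := d_metric.
have dom : dist_dominated (fun z => d z y - d x0 y).
  move=> z; rewrite ler_norml; apply/andP.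
  by have := d_tri z x0 y; have := d_tri x0 z y; have := d_sym x0 z; lra.
split=> //; split; last by exists 1; split => // z; rewrite mul1r.
move=> x e e_gt0; exists e; split => // z dxz.
rewrite ltr_norml; apply/andP.
by have := d_tri z x y; have := d_tri x z y; have := d_sym z x; lra.
Qed.

Lemma in_Me_rescaled f k : in_Me d x0 f -> 0 < k ->
  (forall z, `|f z| <= k * d z x0) ->
  in_Me d x0 (fun z => k^-1 * f z + 0) /\
  dist_dominated (fun z => k^-1 * f z + 0).
Proof.
move=> [f_cont _] k_gt0 f_le.
have kV_ge0 : 0 <= k^-1 by rewrite invr_ge0 ltW.
have dom : dist_dominated (fun z => k^-1 * f z + 0).
  move=> z; rewrite addr0 normrM ger0_norm // mulrC ler_pdivrMr //.
  by rewrite mulrC f_le.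
split=> //; split; last by exists 1; split => // z; rewrite mul1r.
move=> y e e_gt0; have [del [del_gt0 f_near]] := f_cont y _ (mulr_gt0 e_gt0 k_gt0).
exists del; split => // z dyz.
by rewrite !addr0 -mulrBr normrM ger0_norm // mulrC ltr_pdivrMr // f_near.
Qed.

Variable phi : (T -> R) -> R.
Variable xs : nat -> T.
Hypothesis xs_approx : forall n f, in_Me d x0 f -> dist_dominated f ->
  `|phi f - f (xs n)| < n.+1%:R^-1.

Lemma approx_points_cauchy : cauchy_seq d xs.
Proof.
have [_ [d_eq0 [d_sym _]]] := d_metric.
move=> eps eps_gt0; have e2_gt0 : 0 < eps / 2 by rewrite divr_gt0.
have [N N_lt] := eventually_inv_succ_lt e2_gt0.
exists N => m n le_Nm le_Nn.
have [h_Me h_dom] := in_Me_shifted_dist (xs m).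
have := xs_approx n h_Me h_dom; have := xs_approx m h_Me h_dom.
have := N_lt n le_Nn; have := N_lt m le_Nm.
have -> : d (xs m) (xs m) = 0 by apply/d_eq0.
rewrite (d_sym (xs m)) !ltr_norml.
set P := phi _; set a := n.+1%:R^-1; set b := m.+1%:R^-1.
by move=> ? ? /andP[? ?] /andP[? ?]; lra.
Qed.

Lemma approx_points_limit x : in_dual d x0 phi -> converges_to d xs x ->
  forall f, in_Me d x0 f -> phi f = f x.
Proof.
have [_ [_ [d_sym _]]] := d_metric.
move=> phi_dual xs_x f f_Me; have [f_cont [k [k_gt0 f_le]]] := f_Me.
have [g_Me g_dom] := in_Me_rescaled f_Me k_gt0 f_le.
apply/eqP; rewrite -subr_eq0 -normr_le0; apply/ler_addgt0Pr => e e_gt0.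
rewrite add0r; apply: ltW.
have e2_gt0 : 0 < e / 2 by rewrite divr_gt0.
have [del [del_gt0 f_near]] := f_cont x _ e2_gt0.
have [N2 N2_lt] := xs_x del del_gt0.
have kV_gt0 : 0 < k^-1 by rewrite invr_gt0.
have [N1 N1_lt] := eventually_inv_succ_lt (mulr_gt0 kV_gt0 e2_gt0).
pose n := maxn N1 N2.
have f_xn : `|f (xs n) - f x| < e / 2.
  by apply: f_near; rewrite d_sym N2_lt ?leq_maxr.
have phi_xn : `|phi f - f (xs n)| < e / 2.
  have := xs_approx n g_Me g_dom.
  rewrite in_dual_scale // addr0 -mulrBr normrM gtr0_norm // => lt.
  by rewrite -(ltr_pM2l kV_gt0) (lt_trans lt) ?N1_lt ?leq_maxl.
by have := ler_distD (f (xs n)) (phi f) (f x); lra.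
Qed.

End PointedMetric.

Theorem mainTheorem12 (R : realType) (T : Type) (d : T -> T -> R) (x0 : T) :
  is_metric d -> complete_metric d ->
  closed_in_dual d x0 (in_checkM d x0).
Proof.
move=> d_metric d_complete phi phi_dual phi_adh.
have /choice [xs xs_approx] : forall n : nat, exists x psi, in_dual d x0 psi /\
    (forall f, in_Me d x0 f -> psi f = f x) /\
    op_norm d x0 (fun f => phi f - psi f) < n.+1%:R^-1.
  move=> n; have inv_gt0 : 0 < n.+1%:R^-1 :> R by rewrite invr_gt0.
  have [psi [psi_dual [[x psi_x] psi_near]]] := phi_adh _ inv_gt0.
  by exists x, psi.
have approx : forall n f, in_Me d x0 f -> dist_dominated d x0 f ->
    `|phi f - f (xs n)| < n.+1%:R^-1.
  move=> n f f_Me f_dom; have [psi [psi_dual [psi_x psi_near]]] := xs_approx n.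
  rewrite -psi_x //; apply: le_lt_trans psi_near.
  exact: dist_dominated_le_op_norm.
have [x xs_x] := d_complete xs (approx_points_cauchy d_metric approx).
by exists x => f; exact: (approx_points_limit d_metric approx phi_dual xs_x).
Qed.
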